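(* Let $g=\{g_n\}_{n=1}^\infty$ be a sequence of positive numbers such that $(-\Delta_0 g)_n:=2g_n-g_{n-1}-g_{n+1}\ge0$ for all $n\in\mathbb{N}$ (with $g_0:=0$), and set $w_n:=(-\Delta_0g)_n/g_n$. Then for every finitely supported sequence $u=\{u_n\}_{n=0}^\infty$ with $u_0=0$, \[ \sum_{n=1}^\infty|u_n-u_{n-1}|^2=\sum_{n=1}^\infty w_n|u_n|^2+\sum_{n=2}^\infty\Big|\sqrt{\tfrac{g_{n-1}}{g_n}}\,u_n-\sqrt{\tfrac{g_n}{g_{n-1}}}\,u_{n-1}\Big|^2. \] In particular $\sum_{n=1}^\infty w_n|u_n|^2\le\sum_{n=1}^\infty|u_n-u_{n-1}|^2$ for all such $u$. Moreover, if there exist finitely supported sequences $\xi^N=\{\xi^N_n\}_{n=1}^\infty$, $N\in\mathbb{N}$, with $\xi^N\le\xi^{N+1}$ pointwise, $\xi^N_n\to1$ as $N\to\infty$ for every $n$, and \[ \lim_{N\to\infty}\sum_{n=2}^\infty g_ng_{n-1}|\xi^N_n-\xi^N_{n-1}|^2=0, \] then $w$ is an optimal Hardy weight.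
   Context: $\mathbb{N}=\{1,2,\dots\}$. A Hardy weight (for the discrete Dirichlet Laplacian) is a sequence $\tilde w=\{\tilde w_n\}_{n\ge1}$ with $\tilde w_n\ge0$ such that $\sum_{n\ge1}\tilde w_n|u_n|^2\le\sum_{n\ge1}|u_n-u_{n-1}|^2$ for all finitely supported $\{u_n\}_{n\ge0}$ with $u_0=0$. A Hardy weight $w$ is optimal if for every Hardy weight $\tilde w$ with $\tilde w_n\ge w_n$ for all $n$, one has $\tilde w=w$. *)

From HB Require Import structures.
From mathcomp Require Import all_boot all_order all_algebra.
From mathcomp Require Import all_classical all_reals all_analysis.
Set Implicit Arguments. Unset Strict Implicit. Unset Printing Implicit Defensive.
Import Order.TTheory GRing.Theory Num.Theory.
Import numFieldNormedType.Exports.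
Local Open Scope ring_scope.

Definition supp_below {R : realType} (u : nat -> R) (M : nat) : Prop :=
  forall n : nat, (M <= n)%N -> u n = 0.

(* Hardy weight for the discrete Dirichlet Laplacian (indices n >= 1 matter).
   For u with u 0 = 0 and support in [0,M), all nonzero terms of the infinite
   sums lie in the range 1 <= n < M.+1. *)
Definition hardy_weight {R : realType} (w : nat -> R) : Prop :=
  (forall n : nat, (1 <= n)%N -> 0 <= w n) /\
  forall (u : nat -> R) (M : nat), u 0%N = 0 -> supp_below u M ->
    \sum_(1 <= n < M.+1) w n * u n ^+ 2 <=
    \sum_(1 <= n < M.+1) (u n - u n.-1) ^+ 2.

Definition optimal_hardy_weight {R : realType} (w : nat -> R) : Prop :=
  hardy_weight w /\
  forall w' : nat -> R, hardy_weight w' ->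
    (forall n : nat, (1 <= n)%N -> w n <= w' n) ->
    forall n : nat, (1 <= n)%N -> w' n = w n.

Definition mDelta0 {R : realType} (g : nat -> R) (n : nat) : R :=
  2 * g n - g n.-1 - g n.+1.
Definition hweight {R : realType} (g : nat -> R) (n : nat) : R :=
  mDelta0 g n / g n.

(* For a, b > 0 one has the pointwise identity
   (y - x)^2 = (2b - a - c)/b y^2 + (sqrt(a/b) y - sqrt(b/a) x)^2
               + y^2 (c/b - 1) - x^2 (b/a - 1);
   with (a, b, c) = (g_{n-1}, g_n, g_{n+1}) the last two terms telescope when
   summed over n, and they vanish at both ends for finitely supported u with
   u_0 = 0. This gives the identity, hence the Hardy inequality.
   For optimality, test a Hardy weight w' >= w on u = xi^N g: its remainder
   term is g_n g_{n-1} (xi^N_n - xi^N_{n-1})^2, so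
   (w'_n - w_n) g_n^2 (xi^N_n)^2 is bounded by a quantity tending to 0, and
   letting N -> oo gives w'_n <= w_n. *)

From HB Require Import structures.
From mathcomp Require Import all_boot all_order all_algebra.
From mathcomp Require Import all_classical all_reals all_analysis.
From mathcomp Require Import ring.
Import Order.TTheory GRing.Theory Num.Theory.
Import numFieldNormedType.Exports.
Local Open Scope classical_set_scope.
Local Open Scope ring_scope.

Lemma sqrtr_ratio_mul_swap (R : rcfType) (a b : R) : 0 < a -> 0 < b ->
  Num.sqrt (a / b) * Num.sqrt (b / a) = 1.
Proof.
move=> a0 b0; rewrite -sqrtrM ?divr_ge0 ?ltW //.
have -> : a / b * (b / a) = 1 by field; rewrite !gt_eqF.
exact: sqrtr1.
Qed.

Lemma sqr_sqrtr_ratio_sub (R : rcfType) (a b x y : R) : 0 < a -> 0 < b ->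
  (Num.sqrt (a / b) * y - Num.sqrt (b / a) * x) ^+ 2
  = a / b * y ^+ 2 - 2 * x * y + b / a * x ^+ 2.
Proof.
move=> a0 b0.
have -> : (Num.sqrt (a / b) * y - Num.sqrt (b / a) * x) ^+ 2
  = Num.sqrt (a / b) ^+ 2 * y ^+ 2
    - 2 * (Num.sqrt (a / b) * Num.sqrt (b / a)) * x * y
    + Num.sqrt (b / a) ^+ 2 * x ^+ 2 by ring.
by rewrite sqrtr_ratio_mul_swap // !sqr_sqrtr ?divr_ge0 ?ltW // mulr1.
Qed.

Lemma sqr_subr_ground_state (R : rcfType) (a b c x y : R) : 0 < a -> 0 < b ->
  (y - x) ^+ 2 = (2 * b - a - c) / b * y ^+ 2
    + (Num.sqrt (a / b) * y - Num.sqrt (b / a) * x) ^+ 2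
    + y ^+ 2 * (c / b - 1) - x ^+ 2 * (b / a - 1).
Proof.
move=> a0 b0; rewrite sqr_sqrtr_ratio_sub //.
by field; rewrite !gt_eqF.
Qed.

Lemma sqr_ground_state_scaled (R : rcfType) (a b s t : R) : 0 < a -> 0 < b ->
  (Num.sqrt (a / b) * (t * b) - Num.sqrt (b / a) * (s * a)) ^+ 2
  = b * a * (t - s) ^+ 2.
Proof.
move=> a0 b0; rewrite sqr_sqrtr_ratio_sub //.
by field; rewrite !gt_eqF.
Qed.

Section GroundState.

Variables (R : realType) (g : nat -> R).
Hypotheses (g0 : g 0%N = 0) (gpos : forall n : nat, (1 <= n)%N -> 0 < g n).

Definition ground_state_term (u : nat -> R) (n : nat) : R :=
  (Num.sqrt (g n.-1 / g n) * u n - Num.sqrt (g n / g n.-1) * u n.-1) ^+ 2.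

Lemma ground_state_identity_boundary (u : nat -> R) (K : nat) : u 0%N = 0 ->
  \sum_(1 <= n < K.+1) (u n - u n.-1) ^+ 2 =
  \sum_(1 <= n < K.+1) hweight g n * u n ^+ 2
  + \sum_(2 <= n < K.+1) ground_state_term u n
  + u K ^+ 2 * (g K.+1 / g K - 1).
Proof.
move=> u0; elim: K => [|K IH]; first by rewrite !big_geq // u0; ring.
rewrite big_nat_recr //= IH [in RHS]big_nat_recr //=.
case: K IH => [|K] IH.
  rewrite !big_geq // u0 (expr2 (0 : R)) !mul0r /hweight /mDelta0 /= g0.
  by field; rewrite gt_eqF ?gpos.
rewrite (big_nat_recr K.+2 2) //= /ground_state_term /=.
rewrite (@sqr_subr_ground_state _ (g K.+1) (g K.+2) (g K.+3)) ?gpos //.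
rewrite /hweight /mDelta0 /=; ring.
Qed.

Lemma ground_state_identity (u : nat -> R) (M : nat) :
  u 0%N = 0 -> supp_below u M ->
  \sum_(1 <= n < M.+1) (u n - u n.-1) ^+ 2 =
  \sum_(1 <= n < M.+1) hweight g n * u n ^+ 2
  + \sum_(2 <= n < M.+1) ground_state_term u n.
Proof.
move=> u0 suppu.
by rewrite ground_state_identity_boundary // suppu // expr0n mul0r addr0.
Qed.

Lemma hweight_hardy :
  (forall n : nat, (1 <= n)%N -> 0 <= mDelta0 g n) -> hardy_weight (hweight g).
Proof.
move=> superharm; split=> [n n1|u M u0 suppu].
  by rewrite divr_ge0 ?superharm ?ltW ?gpos.
rewrite ground_state_identity // lerDl.
by apply: sumr_ge0 => n _; apply: sqr_ge0.
Qed.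

Lemma ground_state_term_mulg (xi : nat -> R) (n : nat) : (2 <= n)%N ->
  ground_state_term (fun k => xi k * g k) n
  = g n * g n.-1 * (xi n - xi n.-1) ^+ 2.
Proof.
case: n => [|[|n]] // _.
by rewrite /ground_state_term sqr_ground_state_scaled ?gpos.
Qed.

Lemma hardy_excess_le (w : nat -> R) (xi : nat -> R) (B n : nat) :
  hardy_weight w -> (forall k : nat, (1 <= k)%N -> hweight g k <= w k) ->
  supp_below xi B -> (1 <= n)%N ->
  (w n - hweight g n) * g n ^+ 2 * xi n ^+ 2
  <= \sum_(2 <= k < B.+1) g k * g k.-1 * (xi k - xi k.-1) ^+ 2.
Proof.
move=> [_ hardy_w] le_hw suppxi n1.
pose u k := xi k * g k.
have u0 : u 0%N = 0 by rewrite /u g0 mulr0.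
have suppu : supp_below u B by move=> k kB; rewrite /u suppxi ?mul0r.
have -> : \sum_(2 <= k < B.+1) g k * g k.-1 * (xi k - xi k.-1) ^+ 2
          = \sum_(2 <= k < B.+1) ground_state_term u k.
  by apply: eq_big_nat => k /andP[k2 _]; rewrite ground_state_term_mulg.
have [nB|Bn] := ltnP n B.+1; last first.
  rewrite suppxi; last exact: ltnW.
  by rewrite expr0n mulr0; apply: sumr_ge0 => k _; apply: sqr_ge0.
have := hardy_w u B u0 suppu.
rewrite ground_state_identity // -lerBlDl -sumrB; apply: le_trans.
rewrite (bigD1_seq n) ?mem_index_iota ?n1 ?iota_uniq //=.
have -> : w n * u n ^+ 2 - hweight g n * u n ^+ 2
        = (w n - hweight g n) * g n ^+ 2 * xi n ^+ 2 by rewrite /u; ring.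
rewrite lerDl big_seq_cond; apply: sumr_ge0 => k.
rewrite mem_index_iota => /andP[/andP[k1 _] _].
by rewrite -mulrBl mulr_ge0 ?sqr_ge0 ?subr_ge0 ?le_hw.
Qed.

Lemma hweight_optimal (xi : nat -> nat -> R) (B : nat -> nat) :
  (forall n : nat, (1 <= n)%N -> 0 <= mDelta0 g n) ->
  (forall N : nat, supp_below (xi N) (B N)) ->
  (forall n : nat, (1 <= n)%N -> (fun N => xi N n) @ \oo --> (1 : R)) ->
  (fun N => \sum_(2 <= n < (B N).+1) g n * g n.-1 * (xi N n - xi N n.-1) ^+ 2)
    @ \oo --> (0 : R) ->
  optimal_hardy_weight (hweight g).
Proof.
move=> superharm suppxi xi_cvg1 energy_cvg0.
split=> [|w hardy_w le_hw n n1]; first exact: hweight_hardy.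
apply/eqP; rewrite eq_le le_hw // andbT.
have : (w n - hweight g n) * g n ^+ 2 * 1 ^+ 2 <= 0.
  pose excess N := (w n - hweight g n) * g n ^+ 2 * xi N n ^+ 2.
  apply: (@ler_cvg_to _ _ _ _ excess _ _ _ _ energy_cvg0); last first.
    by apply: nearW => N; apply: hardy_excess_le.
  apply: cvgMl_tmp; rewrite expr2; under eq_fun do rewrite expr2.
  exact: cvgM (xi_cvg1 n n1) (xi_cvg1 n n1).
by rewrite expr1n mulr1 pmulr_lle0 ?subr_le0 // exprn_gt0 ?gpos.
Qed.

End GroundState.

Theorem theorem4p3 (R : realType) (g : nat -> R)
  (g0 : g 0%N = 0)
  (gpos : forall n : nat, (1 <= n)%N -> 0 < g n)
  (superharm : forall n : nat, (1 <= n)%N -> 0 <= mDelta0 g n) :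
  (forall (u : nat -> R) (M : nat), u 0%N = 0 -> supp_below u M ->
     \sum_(1 <= n < M.+1) (u n - u n.-1) ^+ 2 =
     \sum_(1 <= n < M.+1) hweight g n * u n ^+ 2 +
     \sum_(2 <= n < M.+1)
        (Num.sqrt (g n.-1 / g n) * u n - Num.sqrt (g n / g n.-1) * u n.-1) ^+ 2)
  /\ hardy_weight (hweight g)
  /\ ((exists (xi : nat -> nat -> R) (B : nat -> nat),
         (forall N : nat, supp_below (xi N) (B N)) /\
         (forall (N n : nat), (1 <= n)%N -> xi N n <= xi N.+1 n) /\
         (forall n : nat, (1 <= n)%N -> (fun N => xi N n) @ \oo --> (1 : R)) /\
         (fun N => \sum_(2 <= n < (B N).+1)
                     g n * g n.-1 * (xi N n - xi N n.-1) ^+ 2) @ \oo --> (0 : R))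
      -> optimal_hardy_weight (hweight g)).
Proof.
split; first exact: ground_state_identity.
split; first exact: hweight_hardy.
move=> [xi [B [suppxi [_ [xi_cvg1 energy_cvg0]]]]].
exact: hweight_optimal suppxi xi_cvg1 energy_cvg0.
Qed.
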